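(* (a) Let $\beta$ be an irrational real number and let $w\in\{\mathrm{N},\mathrm{E}\}^*$ be a $\beta$-Dyck word. Then $\mathrm{sw}_\beta(w)$ is a $\beta$-Dyck word. (b) Let $r,s\in\mathbb{Z}$ and let $w\in\{\mathrm{N},\mathrm{E}\}^*$ be an $(r,s)$-Dyck word. Then $\mathrm{sw}^-_{r,s}(w)$ is an $(r,s)$-Dyck word.
   Context: $\{\mathrm{N},\mathrm{E}\}^*$ is the set of finite words over the letters $\mathrm{N},\mathrm{E}$. A word $w=w_1\cdots w_n$ is identified with the lattice path starting at $(0,0)$ whose $i$-th step is a unit north step if $w_i=\mathrm{N}$ and a unit east step if $w_i=\mathrm{E}$. Each step is thought of as a ''wand'' whose tip is the endpoint of the step. For integers $r,s$, the $(r,s)$-level of a lattice point $(x,y)$ is $ry+sx$. Under the east-north convention, the level $l_i$ of the letter $w_i$ is the $(r,s)$-level of the endpoint of the $i$-th step; equivalently $l_0=0$ and $l_i=l_{i-1}+r$ if $w_i=\mathrm{N}$, $l_i=l_{i-1}+s$ if $w_i=\mathrm{E}$. A word $w$ is an $(r,s)$-Dyck word if all its letters have nonnegative level, i.e. $l_i\ge 0$ for $1\le i\le n$. The sweep map $\mathrm{sw}^-_{r,s}:\{\mathrm{N},\mathrm{E}\}^*\to\{\mathrm{N},\mathrm{E}\}^*$ sends $w$ to the word obtained as follows: start with the empty word; for $k=-1,-2,-3,\ldots$ and then for $k=\ldots,3,2,1,0$ (i.e. first all negative values in decreasing order, then all nonnegative values in decreasing order), scan $w$ from right to left and append each letter $w_i$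 ($1\le i\le n$) with $l_i=k$. For irrational $\beta$, the level of a step is $y-\beta x$ where $(x,y)$ is the endpoint (tip) of the step; distinct steps have distinct such levels. The irrational sweep map $\mathrm{sw}_\beta(w)$ lists the letters of $w$ in the order in which a line $y-\beta x=k$ hits their tips as $k$ decreases from just below $0$ to $-\infty$ and then from $+\infty$ down to $0$; i.e., first the letters with negative level in decreasing order of level, then the letters with positive level in decreasing order of level. A word $w$ is a $\beta$-Dyck word if every lattice point $(x,y)$ visited by its path satisfies $y-\beta x\ge 0$. *)

From HB Require Import structures.
From mathcomp Require Import all_boot all_order all_algebra.
From mathcomp Require Import reals.
Set Implicit Arguments. Unset Strict Implicit. Unset Printing Implicit Defensive.
Import Order.TTheory GRing.Theory Num.Theory.
Local Open Scope ring_scope.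

Inductive letter := N | E.
Definition isN (a : letter) : bool := if a is N then true else false.
Definition isE (a : letter) : bool := if a is E then true else false.

Definition word := seq letter.

Definition xcoord (u : word) : nat := count isE u.
Definition ycoord (u : word) : nat := count isN u.

Definition rs_level (r s : int) (u : word) : int :=
  r * (ycoord u)%:Z + s * (xcoord u)%:Z.

(* level l_i of letter w_i (1 <= i <= n): level of the endpoint of step i,
   i.e. of the prefix of length i. Index j = i - 1 (0-based). *)
Definition rs_levels (r s : int) (w : word) : seq int :=
  [seq rs_level r s (take j.+1 w) | j <- iota 0 (size w)].

Definition rs_dyck (r s : int) (w : word) : bool :=
  all (fun l => 0 <= l) (rs_levels r s w).

Definition rs_letters_at (r s : int) (w : word) (k : int) : word :=
  [seq p.1 | p <- rev (zip w (rs_levels r s w)) & p.2 == k].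

(* sw^-_{r,s}: all levels lie in [-M, M] with M = n(|r|+|s|); we run k over
   -1, -2, ..., -M and then M, M-1, ..., 0 (empty levels contribute nothing). *)
Definition sw_minus (r s : int) (w : word) : word :=
  let M := (size w * (`|r| + `|s|))%N in
  flatten [seq rs_letters_at r s w (- (j.+1)%:Z) | j <- iota 0 M] ++
  flatten [seq rs_letters_at r s w (M - j)%:Z | j <- iota 0 M.+1].

Definition beta_level (R : realType) (beta : R) (u : word) : R :=
  (ycoord u)%:R - beta * (xcoord u)%:R.

Definition beta_levels (R : realType) (beta : R) (w : word) : seq R :=
  [seq beta_level beta (take j.+1 w) | j <- iota 0 (size w)].

Definition beta_dyck (R : realType) (beta : R) (w : word) : bool :=
  all (fun j => 0 <= beta_level beta (take j w)) (iota 0 (size w).+1).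

(* ordering: negative levels first, in decreasing order of level, then
   positive levels in decreasing order of level *)
Definition sweep_before (R : realType) (p q : letter * R) : bool :=
  if (p.2 < 0) == (q.2 < 0) then q.2 <= p.2 else (p.2 < 0).

Definition sw_beta (R : realType) (beta : R) (w : word) : word :=
  [seq p.1 | p <- sort (@sweep_before R) (zip w (beta_levels beta w))].

From mathcomp Require Import all_boot all_order all_algebra.
From mathcomp Require Import reals zify lra.
Set Implicit Arguments. Unset Strict Implicit. Unset Printing Implicit Defensive.
Import Order.TTheory GRing.Theory Num.Theory.
Local Open Scope ring_scope.

(* Both sweeps list the letters of [w] in decreasing order of a key that
   refines the level, so the first [j] letters of the output are the steps of
   [w] whose key is at least some threshold [t].  If the key is itself the
   level [a (i+1)] of the step, the level after those letters is the sum of the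
   increments [a (i+1) - a i] over the steps ending at height at least [t],
   which telescopes to at least [max (a n) t - max (a 0) t >= 0].  For [sw_beta]
   the key is the level, injective because [beta] is irrational; [sw_minus]
   breaks ties right to left, i.e. uses the key [(n+1) * level + index], which
   is the level for the weights [(n+1) * f + 1], and the index part is too
   small to make a negative level nonnegative. *)

Section Telescoping.
Variable R : realDomainType.

Lemma telescope_max_le (a : nat -> R) n t :
  Num.max (a n) t - Num.max (a 0%N) t <=
  \sum_(0 <= i < n | t <= a i.+1) (a i.+1 - a i).
Proof.
elim: n => [|n IH]; first by rewrite big_geq // subrr.
rewrite big_mkcond big_nat_recr //= -big_mkcond.
have step : Num.max (a n.+1) t - Num.max (a n) t <=
            (if t <= a n.+1 then a n.+1 - a n else 0).
  by rewrite /Order.max; case: ifP => ?; case: ifP => ?; case: ifP => ?; lra.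
by rewrite -(subrKA (Num.max (a n) t)) addrC lerD.
Qed.

Lemma sum_increments_above_ge0 (a : nat -> R) n t :
  a 0%N <= a n -> 0 <= \sum_(0 <= i < n | t <= a i.+1) (a i.+1 - a i).
Proof.
move=> a0n; apply: le_trans (telescope_max_le a n t).
by rewrite subr_ge0 /Order.max; case: ifP => ?; case: ifP => ?; lra.
Qed.

Lemma take_key_desc (T : eqType) (K : T -> R) (s : seq T) x0 j :
  pairwise (fun x y => K y < K x) s -> (j < size s)%N ->
  take j.+1 s = filter (fun x => K (nth x0 s j) <= K x) s.
Proof.
move=> s_desc js.
have lt_nth : {in [pred i | (i < size s)%N] &,
                {homo nth x0 s : i k / (i < k)%N >-> K k < K i}}.
  have desc_trans : transitive (fun x y => K y < K x).
    by move=> y x z yx xz; exact: lt_trans xz yx.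
  have s_sorted : sorted (fun x y => K y < K x) s by rewrite sorted_pairwise.
  exact: sorted_ltn_nth desc_trans x0 s s_sorted.
rewrite -[X in filter _ X](cat_take_drop j.+1 s) filter_cat.
have -> : filter (fun x => K (nth x0 s j) <= K x) (take j.+1 s) = take j.+1 s.
  apply/all_filterP/allP => y /(nthP x0) [k]; rewrite size_takel // => kj <-.
  rewrite nth_take //; have [->//|kne] := eqVneq k j.
  by apply: ltW; apply: lt_nth; rewrite ?inE; lia.
have -> : filter (fun x => K (nth x0 s j) <= K x) (drop j.+1 s) = [::].
  apply/eqP/negPn; rewrite -has_filter; apply/hasPn => y /(nthP x0) [k].
  rewrite size_drop => kj <-; rewrite nth_drop -ltNge.
  by apply: lt_nth; rewrite ?inE; lia.
by rewrite cats0.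
Qed.

Lemma prefix_increments_ge0 (b : nat -> R) (O : seq nat) n j :
  perm_eq O (iota 0 n) -> pairwise (fun x y => b y.+1 < b x.+1) O ->
  b 0%N <= b n -> 0 <= \sum_(i <- take j O) (b i.+1 - b i).
Proof.
move=> O_perm O_desc b0n.
have sizeO : size O = n by rewrite (perm_size O_perm) size_iota.
wlog jn : j / (j <= n)%N.
  move=> ge0; have [/ge0//|nj] := leqP j n.
  by rewrite take_oversize ?sizeO 1?ltnW // -(take_size O) sizeO; exact: ge0.
case: j jn => [|j] jn; first by rewrite take0 big_nil.
rewrite (take_key_desc 0%N O_desc) ?sizeO // big_filter (perm_big _ O_perm).
have -> : iota 0 n = index_iota 0 n by rewrite /index_iota subn0.
exact: sum_increments_above_ge0.
Qed.

End Telescoping.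

Lemma ycoord_add_xcoord (u : word) : (ycoord u + xcoord u)%N = size u.
Proof. by rewrite -(count_predC isN); congr addn; apply: eq_count => -[]. Qed.

Definition level (V : zmodType) (f : letter -> V) (u : word) : V :=
  \sum_(x <- u) f x.

Lemma level_letterE (V : zmodType) (p q : V) (u : word) :
  level (fun x => if x is N then p else q) u = p *+ ycoord u + q *+ xcoord u.
Proof.
rewrite /level /ycoord /xcoord; elim: u => [|x u IH]; first by rewrite big_nil !mulr0n addr0.
by rewrite big_cons IH; case: x; rewrite /= add1n mulrS; [exact: addrA | exact: addrCA].
Qed.

Lemma level_cat (V : zmodType) (f : letter -> V) (u v : word) :
  level f (u ++ v) = level f u + level f v.
Proof. exact: big_cat. Qed.

Lemma level_affine (R : pzRingType) (c : R) (f : letter -> R) (u : word) :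
  level (fun x => c * f x + 1) u = c * level f u + (size u)%:R.
Proof.
rewrite /level big_split /= -mulr_sumr; congr (_ + _).
by elim: u => [|x u IH]; rewrite ?big_nil // big_cons IH mulrS.
Qed.

Lemma level_take_succ (V : zmodType) (f : letter -> V) (w : word) i :
  (i < size w)%N -> level f (take i.+1 w) - level f (take i w) = f (nth N w i).
Proof.
by move=> iw; rewrite /level (take_nth N iw) -cats1 big_cat big_seq1 addrC addKr.
Qed.

Lemma level_take_map_nth (V : zmodType) (f : letter -> V) (w : word) (O : seq nat) j :
  all (gtn (size w)) O ->
  level f (take j (map (nth N w) O)) =
  \sum_(i <- take j O) (level f (take i.+1 w) - level f (take i w)).
Proof.
move=> /allP Ow; rewrite -map_take /level big_map big_seq [RHS]big_seq.
by apply: eq_bigr => i /mem_take /Ow iw; rewrite -level_take_succ.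
Qed.

Lemma sweep_prefix_level_ge0 (R : realDomainType) (f : letter -> R) (w : word)
    (O : seq nat) j :
  perm_eq O (iota 0 (size w)) ->
  pairwise (fun x y => level f (take y.+1 w) < level f (take x.+1 w)) O ->
  0 <= level f w -> 0 <= level f (take j (map (nth N w) O)).
Proof.
move=> O_perm O_desc w_ge0.
rewrite level_take_map_nth; last by apply/allP => i; rewrite (perm_mem O_perm) mem_iota.
apply: (prefix_increments_ge0 _ O_perm O_desc).
by rewrite take0 take_size /level big_nil.
Qed.

Lemma pairwise_lt_of_le (T : eqType) (R : numDomainType) (K : T -> R) (s : seq T) :
  uniq s -> {in s &, injective K} ->
  pairwise (fun x y => K y <= K x) s -> pairwise (fun x y => K y < K x) s.
Proof.
elim: s => //= x s IH /andP[xs s_uniq] K_inj /andP[x_ge s_le].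
rewrite IH //; last by move=> y z ys zs; apply: K_inj; rewrite inE ?ys ?zs orbT.
rewrite andbT; apply/allP => y ys.
have y_neq_x : y != x by apply: contraNneq xs => <-.
rewrite lt_neqAle (allP x_ge y ys) andbT; apply: contra y_neq_x => /eqP Kyx.
by apply/eqP/K_inj; rewrite ?inE ?eqxx ?ys ?orbT.
Qed.

Section IrrationalSweep.
Variables (R : realType) (beta : R).

Definition beta_weight (x : letter) : R := if x is N then 1 else - beta.

Lemma beta_levelE (u : word) : beta_level beta u = level beta_weight u.
Proof. by rewrite level_letterE /beta_level mulr_natr mulNrn. Qed.

Lemma beta_dyckP (u : word) :
  reflect (forall j, 0 <= level beta_weight (take j u)) (beta_dyck beta u).
Proof.
apply: (iffP allP) => [u_dyck j | ge0 j _]; last by rewrite beta_levelE.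
rewrite -beta_levelE; have [ju|uj] := leqP j (size u).
  by apply: u_dyck; rewrite mem_iota ltnS.
rewrite take_oversize 1?ltnW // -{1}(take_size u).
by apply: u_dyck; rewrite mem_iota /= ltnS.
Qed.

Lemma sweep_before_total : total (@sweep_before R).
Proof.
move=> p q; rewrite /sweep_before eq_sym.
by case: (p.2 < 0) (q.2 < 0) => [] [] //=; exact: le_total.
Qed.

Hypothesis beta_irr : irrational beta.

Lemma beta_level_eq0 (u : word) : level beta_weight u = 0 -> u = [::].
Proof.
rewrite -beta_levelE /beta_level => /eqP; rewrite subr_eq0 => /eqP yx.
have [x0|xn0] := eqVneq (xcoord u) 0%N.
  move: yx; rewrite x0 mulr0 => /eqP; rewrite pnatr_eq0 => /eqP y0.
  by apply/size0nil; rewrite -ycoord_add_xcoord y0 x0.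
exfalso; apply: beta_irr; apply/rationalP; exists (ycoord u)%:Z, (xcoord u).
by rewrite -pmulrn yx mulfK // pnatr_eq0.
Qed.

Lemma beta_level_take_inj (w : word) :
  {in gtn (size w).+1 &, injective (fun i => level beta_weight (take i w))}.
Proof.
move=> i j; rewrite !inE /= !ltnS => iw jw.
wlog ij : i j iw jw / (i <= j)%N.
  move=> sym; have [ij|/ltnW ji] := leqP i j; first exact: sym.
  by move/esym/sym=> ->.
have split_j : take j w = take i w ++ drop i (take j w).
  by rewrite -{1}(cat_take_drop i (take j w)) take_takel.
rewrite split_j level_cat -{1}(addr0 (level _ (take i w))) => /addrI/esym.
move/beta_level_eq0/(congr1 size); rewrite size_drop size_takel //=; lia.
Qed.

Lemma sw_beta_dyck (w : word) : beta_dyck beta w -> beta_dyck beta (sw_beta beta w).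
Proof.
move=> /beta_dyckP w_dyck.
set L := fun i => level beta_weight (take i.+1 w).
set O := sort (relpre (fun i => (nth N w i, beta_level beta (take i.+1 w))) (@sweep_before R))
              (iota 0 (size w)).
have sw_O : sw_beta beta w = map (nth N w) O.
  by rewrite /sw_beta /beta_levels -{1}(mkseq_nth N w) /mkseq zip_map sort_map -map_comp.
have O_perm : perm_eq O (iota 0 (size w)) by rewrite perm_sort.
have O_w : all (gtn (size w)) O by apply/allP => i; rewrite (perm_mem O_perm) mem_iota.
have O_sorted : sorted (fun i j => L j <= L i) O.
  apply: (sub_in_sorted _ O_w (sort_sorted (fun i j => sweep_before_total _ _) _)).
  by move=> i j _ _; rewrite /= /sweep_before /= !beta_levelE !ltNge !w_dyck.
have O_desc : pairwise (fun i j => L j < L i) O.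
  apply: pairwise_lt_of_le; first by rewrite (perm_uniq O_perm) iota_uniq.
    move=> i j /(allP O_w) iw /(allP O_w) jw /beta_level_take_inj.
    by rewrite !inE /= !ltnS => /(_ iw jw) [].
  by rewrite -sorted_pairwise // => j i k ij jk; exact: le_trans jk ij.
apply/beta_dyckP => j; rewrite sw_O; apply: sweep_prefix_level_ge0 => //.
by rewrite -(take_size w).
Qed.

End IrrationalSweep.

(* Indices in [rev (iota 0 n)] because [sw_minus] scans each level right to left. *)
Definition level_block (n : nat) (L : nat -> int) (k : int) : seq nat :=
  [seq i <- rev (iota 0 n) | L i == k].

Lemma level_blocks_desc (n : nat) (L : nat -> int) (ks : seq int) :
  pairwise (fun k k' => k' < k) ks ->
  pairwise (fun i j => n.+1%:Z * L j + j.+1%:Z < n.+1%:Z * L i + i.+1%:Z)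
    (flatten [seq level_block n L k | k <- ks]).
Proof.
elim: ks => [|k ks IH] //= /andP[k_gt ks_desc].
rewrite pairwise_cat IH // andbT; apply/andP; split.
  apply/allrelP => i j; rewrite mem_filter => /andP[/eqP Li _].
  move=> /flatten_mapP[k' k'ks]; rewrite mem_filter mem_rev mem_iota => /andP[/eqP Lj /andP[_ jn]].
  have Lji : L j < L i by rewrite Li Lj; exact: (allP k_gt).
  nia.
have block_desc : pairwise (fun i j : nat => (j < i)%N) (rev (iota 0 n)).
  rewrite -sorted_pairwise; last by move=> j i l ij jl; exact: ltn_trans jl ij.
  by rewrite rev_sorted iota_ltn_sorted.
apply: (sub_in_pairwise _ (filter_all _ _) (pairwise_filter _ block_desc)).
by move=> i j /eqP Li /eqP Lj ji; rewrite Li Lj; lia.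
Qed.

Lemma level_blocks_perm (n : nat) (L : nat -> int) (ks : seq int) :
  pairwise (fun k k' => k' < k) ks -> (forall i, (i < n)%N -> L i \in ks) ->
  perm_eq (flatten [seq level_block n L k | k <- ks]) (iota 0 n).
Proof.
move=> ks_desc L_ks; apply: uniq_perm; last 1 first.
- move=> i; rewrite mem_iota /=; apply/flatten_mapP/idP => [[k _]|i_n].
    by rewrite mem_filter mem_rev mem_iota => /andP[_].
  by exists (L i); rewrite ?L_ks // mem_filter eqxx mem_rev mem_iota.
- by apply: pairwise_uniq (level_blocks_desc n L ks_desc) => i; exact: ltxx.
- exact: iota_uniq.
Qed.

Lemma ge0_of_scaled (n m : nat) (x : int) :
  (m <= n)%N -> 0 <= n.+1%:Z * x + m%:Z -> 0 <= x.
Proof. nia. Qed.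

Lemma pairwise_gt_downto (M : nat) :
  pairwise (fun k k' => k' < k) [seq (M - j)%:Z | j <- iota 0 M.+1].
Proof.
rewrite pairwise_map; apply: (sub_in_pairwise (P := gtn M.+1) (r := ltn)).
- by move=> i j; rewrite !inE /= => iM jM ij; rewrite ltz_nat; lia.
- by apply/allP => j; rewrite mem_iota.
- by rewrite -sorted_pairwise ?iota_ltn_sorted //; exact: ltn_trans.
Qed.

Section IntegerSweep.
Variables (r s : int).

Definition rs_weight (x : letter) : int := if x is N then r else s.

Lemma rs_levelE (u : word) : rs_level r s u = level rs_weight u.
Proof. by rewrite level_letterE /rs_level -!natz !mulr_natr. Qed.

Lemma rs_dyckP (u : word) :
  reflect (forall j, 0 <= level rs_weight (take j u)) (rs_dyck r s u).
Proof.
apply: (iffP allP) => [u_dyck j | ge0 l /mapP[j _ ->]]; last by rewrite rs_levelE.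
case: j => [|j]; first by rewrite take0 /level big_nil.
rewrite -rs_levelE; have [ju|uj] := ltnP j (size u).
  by apply: u_dyck; apply: map_f; rewrite mem_iota.
case: u u_dyck uj => [|x u] u_dyck uj; first by rewrite /rs_level /= !mulr0.
rewrite take_oversize 1?leqW //; apply: u_dyck; apply/mapP; exists (size u).
  by rewrite mem_iota /= ltnSn.
by rewrite -[(size u).+1]/(size (x :: u)) take_size.
Qed.

Lemma rs_level_le (u : word) : rs_level r s u <= (size u * (`|r| + `|s|))%N%:Z.
Proof.
rewrite rs_levelE /level; elim: u => [|x u IH]; first by rewrite big_nil.
rewrite big_cons /= mulSn PoszD.
move: IH; set P := (size u * _)%N; set S := \sum_(_ <- u) _ => IH.
by have := lez_abs r; have := lez_abs s; case: x => /=; lia.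
Qed.

Lemma sw_minus_blocks (w : word) :
  let M := (size w * (`|r| + `|s|))%N in
  let L := fun i => rs_level r s (take i.+1 w) in
  (forall i, (i < size w)%N -> 0 <= L i) ->
  sw_minus r s w = map (nth N w) (flatten [seq level_block (size w) L k
                                          | k <- [seq (M - j)%:Z | j <- iota 0 M.+1]]).
Proof.
move=> M L L_ge0.
have letters_at k : rs_letters_at r s w k = map (nth N w) (level_block (size w) L k).
  rewrite /rs_letters_at /rs_levels -{1}(mkseq_nth N w) /mkseq zip_map.
  by rewrite -map_rev filter_map -map_comp.
have block_neg k : k < 0 -> level_block (size w) L k = [::].
  move=> k_lt0; apply/eqP/negPn; rewrite -has_filter; apply/hasPn => i.
  rewrite mem_rev mem_iota /= => iw; apply/eqP => Lik.
  by have := L_ge0 i iw; rewrite Lik; lia.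
rewrite /sw_minus -/M.
have -> : flatten [seq rs_letters_at r s w (- (j.+1)%:Z) | j <- iota 0 M] = [::].
  by elim: (iota 0 M) => //= j js ->; rewrite letters_at block_neg.
rewrite cat0s -map_comp.
by elim: (iota 0 M.+1) => //= j js ->; rewrite map_cat letters_at.
Qed.

Lemma sw_minus_dyck (w : word) : rs_dyck r s w -> rs_dyck r s (sw_minus r s w).
Proof.
move=> /rs_dyckP w_ge0.
set n := size w; set M := (n * (`|r| + `|s|))%N.
set L := fun i => rs_level r s (take i.+1 w).
set ks := [seq (M - j)%:Z | j <- iota 0 M.+1].
have L_ge0 i : (i < n)%N -> 0 <= L i by rewrite /L rs_levelE.
have ks_desc : pairwise (fun k k' => k' < k) ks := pairwise_gt_downto M.
have L_ks i : (i < n)%N -> L i \in ks.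
  move=> i_n; apply/mapP; exists (M - `|L i|)%N; first by rewrite mem_iota /= ltnS leq_subr.
  have : L i <= (i.+1 * (`|r| + `|s|))%N%:Z by rewrite /L -[in X in _ <= X](size_takel i_n) rs_level_le.
  have : (i.+1 * (`|r| + `|s|) <= M)%N by rewrite leq_mul2r i_n orbT.
  by have := L_ge0 i i_n; lia.
have O_perm := level_blocks_perm ks_desc L_ks.
have O_n : all (gtn n) (flatten [seq level_block n L k | k <- ks]).
  by apply/allP => i; rewrite (perm_mem O_perm) mem_iota.
(* The tie-breaking key of [sw_minus] is the level for the weights [g]. *)
set g := fun x => n.+1%:Z * rs_weight x + 1.
have O_desc : pairwise (fun i j => level g (take j.+1 w) < level g (take i.+1 w))
                (flatten [seq level_block n L k | k <- ks]).
  apply: sub_in_pairwise _ O_n (level_blocks_desc n L ks_desc) => i j /= i_n j_n.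
  by rewrite !level_affine -!rs_levelE !size_takel // -!natz.
have g_w : 0 <= level g w.
  by rewrite level_affine -(take_size w) addr_ge0 ?mulr_ge0.
apply/rs_dyckP => j; rewrite (sw_minus_blocks L_ge0).
have := sweep_prefix_level_ge0 j O_perm O_desc g_w; rewrite level_affine natz.
apply: ge0_of_scaled; rewrite size_take_min size_map (perm_size O_perm) size_iota.
exact: geq_minr.
Qed.

End IntegerSweep.

Theorem mainTheorem1 (R : realType) :
  (forall (beta : R) (w : word),
      @irrational R beta -> beta_dyck beta w -> beta_dyck beta (sw_beta beta w)) /\
  (forall (r s : int) (w : word),
      rs_dyck r s w -> rs_dyck r s (sw_minus r s w)).
Proof.
split=> [beta w beta_irr | r s w]; first exact: sw_beta_dyck.
exact: sw_minus_dyck.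
Qed.
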